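(* Let $\alpha>0$. The equation $e^{2\sigma}=\alpha\sigma+\frac12$ has infinitely many roots $\sigma\in\mathbb{C}$, and their real parts are unbounded above: there is a sequence of roots $\sigma_k$ with $\Im(\sigma_k)\to+\infty$ and $\Re(\sigma_k)-\frac12\ln k$ bounded as $k\to\infty$; in particular $\Re(\sigma_k)\to+\infty$.
   Context: This is the dispersion relation of the square-wave limit ($\beta\to0$) of the model equation $u_t+\frac12(u^2-u\,u(0^-,t))_x=f(x,u(0^-,t))$ with the shifted-Gaussian source whose peak location is $-u(0^-,t)^{-\alpha}$; its roots with positive real part are the eigenvalues of the linearized problem in that limit. *)

From Stdlib Require Import Reals.
Open Scope R_scope.

Definition Cplx : Type := (R * R)%type.
Definition Re (z : Cplx) : R := fst z.
Definition Im (z : Cplx) : R := snd z.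

Definition Cexp (z : Cplx) : Cplx := (exp (Re z) * cos (Im z), exp (Re z) * sin (Im z)).
Definition Cscal (a : R) (z : Cplx) : Cplx := (a * Re z, a * Im z).
Definition Cadd (z w : Cplx) : Cplx := (Re z + Re w, Im z + Im w).
Definition RtoC (a : R) : Cplx := (a, 0).

Definition is_root (alpha : R) (s : Cplx) : Prop :=
  Cexp (Cscal 2 s) = Cadd (Cscal alpha s) (RtoC (1/2)).

(* Write sigma = x + i y.  The imaginary part of the equation reads
   e^{2x} sin 2y = alpha y, so whenever sin 2y > 0 the real part is forced:
   x = 1/2 ln (alpha y / sin 2y).  Substituting into the real part
   e^{2x} cos 2y = alpha x + 1/2 leaves one real equation in y alone,
   [height_eq alpha y = 0].  On each window [n pi + pi/8, n pi + 3 pi/8]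
   we have sin 2y >= sin (pi/4), and for n large the continuous function
   [height_eq alpha] is negative at the left end and positive at the right
   end, so the intermediate value theorem yields a root y_n in the window.
   The roots sigma_k built from the windows of index k + K (K fixed) are
   pairwise distinct (disjoint windows), satisfy Im sigma_k >= k pi, and
   Re sigma_k = 1/2 (ln alpha + ln y_k - ln sin 2y_k), where y_k / k and
   sin 2y_k are trapped between positive constants; this gives the bound on
   Re sigma_k - 1/2 ln k and the divergence of Re sigma_k. *)

From Stdlib Require Import Reals Lra.
From Coquelicot Require Import Hierarchy Continuity Derive AutoDerive.
Open Scope R_scope.

(* The candidate root of height y: its real part is dictated by the
   imaginary part of the equation. *)
Definition root_of_height (alpha y : R) : Cplx :=
  (/ 2 * ln (alpha * y / sin (2 * y)), y).

(* What remains of the real part of the equation once x is eliminated. *)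
Definition height_eq (alpha y : R) : R :=
  alpha / 2 * ln (alpha * y / sin (2 * y)) + 1 / 2
  - alpha * y * cos (2 * y) / sin (2 * y).

Lemma root_of_height_is_root (alpha y : R) :
  0 < alpha -> 0 < y -> 0 < sin (2 * y) -> height_eq alpha y = 0 ->
  is_root alpha (root_of_height alpha y).
Proof.
  intros ha hy hs hH.
  unfold is_root, root_of_height, Cexp, Cscal, Cadd, RtoC, Re, Im; simpl.
  assert (hw : 0 < alpha * y / sin (2 * y)) by (apply Rdiv_lt_0_compat; nra).
  replace (2 * (/ 2 * ln (alpha * y / sin (2 * y))))
    with (ln (alpha * y / sin (2 * y))) by field.
  rewrite exp_ln by exact hw.
  unfold height_eq in hH; f_equal; field_simplify; lra.
Qed.

Lemma height_eq_continuous (alpha y : R) :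
  0 < alpha -> 0 < y -> 0 < sin (2 * y) -> continuity_pt (height_eq alpha) y.
Proof.
  intros ha hy hs.
  apply continuity_pt_filterlim; change (continuous (height_eq alpha) y).
  apply (@ex_derive_continuous R_AbsRing R_NormedModule).
  unfold height_eq; auto_derive; repeat split; try lra.
  apply Rdiv_lt_0_compat; nra.
Qed.

Definition sin_floor : R := sin (PI / 4).

Lemma sin_floor_pos : 0 < sin_floor.
Proof.
  unfold sin_floor; rewrite sin_PI4.
  apply Rdiv_lt_0_compat; [lra | apply sqrt_lt_R0; lra].
Qed.

Lemma cos_PI4_sin_floor : cos (PI / 4) = sin_floor.
Proof. unfold sin_floor; rewrite sin_PI4, cos_PI4; reflexivity. Qed.

(* The n-th window, on which 2y lies within pi/4 of pi/2 modulo 2 pi. *)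
Definition window (n : nat) (y : R) : Prop :=
  INR n * PI + PI / 8 <= y <= INR n * PI + 3 * PI / 8.

Lemma sin_ge_floor_on_window (n : nat) (y : R) :
  window n y -> sin_floor <= sin (2 * y).
Proof.
  unfold window; intro hw; pose proof PI_RGT_0.
  replace (2 * y) with ((2 * y - 2 * INR n * PI) + 2 * INR n * PI) by ring.
  rewrite sin_period, <- cos_shift, <- cos_PI4_sin_floor.
  set (u := PI / 2 - (2 * y - 2 * INR n * PI)).
  assert (hu : Rabs u <= PI / 4) by (apply Rabs_le; unfold u; lra).
  assert (hcos : cos u = cos (Rabs u)).
  { destruct (Rle_lt_dec 0 u); [rewrite Rabs_right | rewrite Rabs_left, cos_neg]; lra. }
  rewrite hcos; pose proof (Rabs_pos u).
  destruct (Rle_lt_or_eq_dec _ _ hu) as [hlt | heq].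
  - left; apply cos_decreasing_1; lra.
  - rewrite heq; lra.
Qed.

Lemma height_eq_left_neg (alpha : R) (n : nat) :
  0 < alpha -> Rabs (ln (alpha / sin_floor)) + / alpha < INR n ->
  height_eq alpha (INR n * PI + PI / 8) < 0.
Proof.
  intros ha hn; pose proof PI_RGT_0; pose proof PI2_1; pose proof sin_floor_pos.
  pose proof (Rabs_pos (ln (alpha / sin_floor))).
  assert (0 < / alpha) by (apply Rinv_0_lt_compat; lra).
  set (a := INR n * PI + PI / 8).
  assert (hna : INR n < a).
  { assert (0 <= INR n) by apply pos_INR. unfold a; nra. }
  assert (hsc : sin (2 * a) = sin_floor /\ cos (2 * a) = sin_floor).
  { unfold a; replace (2 * (INR n * PI + PI / 8)) with (PI / 4 + 2 * INR n * PI) by field.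
    rewrite sin_period, cos_period, cos_PI4_sin_floor; split; reflexivity. }
  destruct hsc as [hs hc]; unfold height_eq; rewrite hs, hc.
  replace (alpha * a / sin_floor) with (alpha / sin_floor * a) by (field; lra).
  rewrite ln_mult by (try apply Rdiv_lt_0_compat; lra).
  assert (ln a < a) by (pose proof (exp_ineq1 a); apply exp_lt_inv; rewrite exp_ln; lra).
  pose proof (Rle_abs (ln (alpha / sin_floor))).
  assert (alpha * / alpha = 1) by (field; lra).
  replace (alpha * a * sin_floor / sin_floor) with (alpha * a) by (field; lra).
  nra.
Qed.

Lemma height_eq_right_pos (alpha : R) (n : nat) :
  0 < alpha -> / alpha < INR n -> 0 < height_eq alpha (INR n * PI + 3 * PI / 8).
Proof.
  intros ha hn; pose proof PI_RGT_0; pose proof PI2_1; pose proof sin_floor_pos.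
  set (b := INR n * PI + 3 * PI / 8).
  assert (hnb : INR n < b).
  { assert (0 <= INR n) by apply pos_INR. unfold b; nra. }
  assert (hsc : sin (2 * b) = sin_floor /\ cos (2 * b) = - sin_floor).
  { unfold b; replace (2 * (INR n * PI + 3 * PI / 8))
      with ((PI - PI / 4) + 2 * INR n * PI) by field.
    rewrite sin_period, cos_period, sin_PI_x, Rtrigo_facts.cos_pi_minus, cos_PI4_sin_floor.
    split; reflexivity. }
  destruct hsc as [hs hc]; unfold height_eq; rewrite hs, hc.
  assert (hab : 1 < alpha * b).
  { assert (alpha * / alpha = 1) by (field; lra). nra. }
  assert (0 < ln (alpha * b / sin_floor)).
  { rewrite <- ln_1; apply ln_increasing; [lra |].
    pose proof (SIN_bound (PI / 4)); fold sin_floor in *.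
    apply Rlt_le_trans with (alpha * b); [lra |].
    apply Rmult_le_reg_r with sin_floor; [lra |].
    replace (alpha * b / sin_floor * sin_floor) with (alpha * b) by (field; lra); nra. }
  replace (alpha * b * - sin_floor / sin_floor) with (- (alpha * b)) by (field; lra).
  nra.
Qed.

Lemma height_eq_zero_in_window (alpha : R) (n : nat) :
  0 < alpha -> Rabs (ln (alpha / sin_floor)) + / alpha < INR n ->
  {y | window n y /\ height_eq alpha y = 0}.
Proof.
  intros ha hn; pose proof PI_RGT_0; pose proof sin_floor_pos.
  assert (hn0 : 0 <= INR n) by apply pos_INR.
  assert (hinv : 0 < / alpha) by (apply Rinv_0_lt_compat; lra).
  pose proof (Rabs_pos (ln (alpha / sin_floor))).
  apply Ranalysis5.IVT_interv.
  - intros y hy; pose proof (sin_ge_floor_on_window n y hy).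
    apply height_eq_continuous; [lra | | lra].
    destruct hy; nra.
  - lra.
  - apply height_eq_left_neg; assumption.
  - apply height_eq_right_pos; lra.
Qed.

Lemma re_root_of_height (alpha y : R) :
  0 < alpha -> 0 < y -> 0 < sin (2 * y) ->
  Re (root_of_height alpha y) = / 2 * (ln alpha + ln y - ln (sin (2 * y))).
Proof.
  intros ha hy hs; unfold Re, root_of_height; simpl.
  unfold Rdiv; rewrite ln_mult, ln_mult, ln_Rinv;
    try apply Rinv_0_lt_compat; try apply Rmult_lt_0_compat; auto; ring.
Qed.

Lemma Rabs_ln_between (a b x : R) :
  0 < a -> a <= x <= b -> Rabs (ln x) <= Rabs (ln a) + Rabs (ln b).
Proof.
  intros ha [hax hxb].
  pose proof (Rcomplements.ln_le a x ha hax).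
  pose proof (Rcomplements.ln_le x b ltac:(lra) hxb).
  pose proof (Rabs_pos (ln a)); pose proof (Rabs_pos (ln b)).
  pose proof (Rle_abs (ln b)); pose proof (Rle_abs (- ln a)); rewrite Rabs_Ropp in *.
  apply Rabs_le; lra.
Qed.

Section RootSequence.

Variables (alpha : R) (K : nat) (y : nat -> R).
Hypothesis halpha : 0 < alpha.
Hypothesis hwindow : forall k, window (k + K) (y k).
Hypothesis hzero : forall k, height_eq alpha (y k) = 0.

Let sigma (k : nat) : Cplx := root_of_height alpha (y k).

Lemma height_bounds (k : nat) :
  INR k * PI + PI / 8 <= y k <= (INR k + INR K + 1) * PI.
Proof.
  pose proof PI_RGT_0; pose proof (pos_INR K).
  destruct (hwindow k) as [h1 h2]; rewrite plus_INR in h1, h2; nra.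
Qed.

Lemma height_pos (k : nat) : 0 < y k.
Proof. pose proof PI_RGT_0; pose proof (pos_INR k); pose proof (height_bounds k); nra. Qed.

Lemma sin_height_bounds (k : nat) : sin_floor <= sin (2 * y k) <= 1.
Proof. split; [apply (sin_ge_floor_on_window (k + K)), hwindow | apply SIN_bound]. Qed.

Lemma sigma_is_root (k : nat) : is_root alpha (sigma k).
Proof.
  pose proof sin_floor_pos; pose proof (sin_height_bounds k).
  apply root_of_height_is_root; [exact halpha | apply height_pos | lra | apply hzero].
Qed.

(* Distinct indices give distinct windows, hence distinct heights. *)
Lemma sigma_injective (i j : nat) : sigma i = sigma j -> i = j.
Proof.
  intro hij; pose proof PI_RGT_0.
  assert (hy : y i = y j) by (change (snd (sigma i) = snd (sigma j)); rewrite hij; reflexivity).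
  destruct (hwindow i) as [hi1 hi2], (hwindow j) as [hj1 hj2].
  rewrite !plus_INR in hi1, hi2, hj1, hj2.
  destruct (Nat.lt_total i j) as [h | [h | h]]; [| exact h |]; exfalso;
    pose proof (le_INR _ _ h) as hS; rewrite S_INR in hS; nra.
Qed.

(* Im sigma_k = y_k >= k pi. *)
Lemma im_sigma_cv_infty : cv_infty (fun k => Im (sigma k)).
Proof.
  intro M; pose proof PI_RGT_0.
  destruct (INR_archimed PI M) as [N HN]; [lra |].
  exists N; intros k hk; apply le_INR in hk.
  unfold sigma, root_of_height, Im; simpl.
  pose proof (height_bounds k); nra.
Qed.

(* Re sigma_k - 1/2 ln k = 1/2 (ln alpha + ln (y_k / k) - ln sin 2y_k), and
   y_k / k lies in [pi, (K + 2) pi] for k >= 1. *)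
Lemma re_sigma_minus_log_bounded : exists M : R, forall k : nat, (1 <= k)%nat ->
  Rabs (Re (sigma k) - / 2 * ln (INR k)) <= M.
Proof.
  pose proof PI_RGT_0; pose proof sin_floor_pos; pose proof (pos_INR K).
  exists (/ 2 * (Rabs (ln alpha) + (Rabs (ln PI) + Rabs (ln ((INR K + 2) * PI)))
                 + (Rabs (ln sin_floor) + Rabs (ln 1)))).
  intros k hk; apply le_INR in hk; simpl in hk.
  pose proof (height_bounds k) as hb; pose proof (sin_height_bounds k) as hs.
  unfold sigma; rewrite re_root_of_height by (try apply height_pos; lra).
  assert (hratio : PI <= y k / INR k <= (INR K + 2) * PI).
  { split; [apply Rmult_le_reg_r with (INR k) | apply Rmult_le_reg_r with (INR k)];
      try lra; unfold Rdiv; rewrite Rmult_assoc, Rinv_l by lra; nra. }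
  replace (/ 2 * (ln alpha + ln (y k) - ln (sin (2 * y k))) - / 2 * ln (INR k))
    with (/ 2 * (ln alpha + ln (y k / INR k) - ln (sin (2 * y k)))).
  2: { unfold Rdiv; rewrite ln_mult, ln_Rinv;
         [ring | lra | apply height_pos | apply Rinv_0_lt_compat; lra]. }
  pose proof (Rabs_ln_between PI _ _ PI_RGT_0 hratio).
  pose proof (Rabs_ln_between sin_floor _ _ sin_floor_pos hs).
  pose proof (Rabs_triang (ln alpha + ln (y k / INR k)) (- ln (sin (2 * y k)))).
  pose proof (Rabs_triang (ln alpha) (ln (y k / INR k))).
  rewrite Rabs_Ropp in *.
  rewrite Rabs_mult, Rabs_right by lra.
  unfold Rminus; apply Rmult_le_compat_l; lra.
Qed.

(* Re sigma_k >= 1/2 ln (alpha y_k) since sin 2y_k <= 1. *)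
Lemma re_sigma_cv_infty : cv_infty (fun k => Re (sigma k)).
Proof.
  intro M; pose proof PI_RGT_0; pose proof sin_floor_pos.
  destruct (INR_archimed (alpha * PI) (exp (2 * M))) as [N HN]; [nra |].
  exists N; intros k hk; apply le_INR in hk.
  pose proof (height_bounds k); pose proof (sin_height_bounds k).
  unfold sigma; rewrite re_root_of_height by (try apply height_pos; lra).
  assert (hsin : ln (sin (2 * y k)) <= 0) by (rewrite <- ln_1; apply Rcomplements.ln_le; lra).
  assert (hbig : exp (2 * M) < alpha * y k).
  { assert (INR N * (alpha * PI) <= INR k * (alpha * PI)) by (apply Rmult_le_compat_r; nra).
    assert (alpha * (INR k * PI) <= alpha * y k) by (apply Rmult_le_compat_l; lra).
    nra. }
  assert (2 * M < ln (alpha * y k)).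
  { rewrite <- (ln_exp (2 * M)); apply ln_increasing; [apply exp_pos | exact hbig]. }
  rewrite ln_mult in * by (try apply height_pos; lra).
  lra.
Qed.

End RootSequence.

Lemma heights_exist (alpha : R) : 0 < alpha ->
  exists (K : nat) (y : nat -> R),
    forall k, window (k + K) (y k) /\ height_eq alpha (y k) = 0.
Proof.
  intro ha.
  destruct (INR_archimed 1 (Rabs (ln (alpha / sin_floor)) + / alpha)) as [K HK]; [lra |].
  assert (hK : forall k, Rabs (ln (alpha / sin_floor)) + / alpha < INR (k + K)).
  { intro k; rewrite plus_INR; pose proof (pos_INR k); lra. }
  exists K, (fun k => proj1_sig (height_eq_zero_in_window alpha (k + K) ha (hK k))).
  intro k; exact (proj2_sig (height_eq_zero_in_window alpha (k + K) ha (hK k))).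
Qed.

Theorem mainTheorem6 (alpha : R) (halpha : 0 < alpha) :
  (* infinitely many roots *)
  (exists f : nat -> Cplx, (forall k, is_root alpha (f k)) /\
     (forall i j, f i = f j -> i = j)) /\
  (* a sequence of roots with Im -> +oo and Re - (1/2) ln k bounded, Re -> +oo *)
  (exists s : nat -> Cplx,
     (forall k, is_root alpha (s k)) /\
     cv_infty (fun k => Im (s k)) /\
     (exists M : R, forall k : nat, (1 <= k)%nat ->
        Rabs (Re (s k) - / 2 * ln (INR k)) <= M) /\
     cv_infty (fun k => Re (s k))).
Proof.
  destruct (heights_exist alpha halpha) as [K [y hy]].
  assert (hwindow : forall k, window (k + K) (y k)) by (intro k; apply hy).
  assert (hzero : forall k, height_eq alpha (y k) = 0) by (intro k; apply hy).
  set (sigma := fun k => root_of_height alpha (y k)).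
  split; exists sigma.
  - split; [apply sigma_is_root with K | apply sigma_injective with K]; assumption.
  - repeat split.
    + apply sigma_is_root with K; assumption.
    + apply im_sigma_cv_infty with K; assumption.
    + apply re_sigma_minus_log_bounded with K; assumption.
    + apply re_sigma_cv_infty with K; assumption.
Qed.
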